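(* Let $a_1,\ldots,a_k$ be positive integers, $A=\sum_{j=1}^k a_j$, $n=k+3$, and $v=[4A+2;\,8a_1,\ldots,8a_k,\,1,\,1,\,1]$ (players $1,\ldots,n$). Let $v_{\&\{n-1,n\}}$ be the game in which players $n-1$ and $n$ merge into one player $\&\{n-1,n\}$ of weight $2$. Then $\beta_{\&\{n-1,n\}}(v_{\&\{n-1,n\}})>\beta_{n-1}(v)+\beta_n(v)$ if and only if there is a set $P\subseteq\{1,\ldots,k\}$ with $\sum_{j\in P}a_j=\sum_{j\notin P}a_j$.
   Context: A weighted voting game $[q;w_1,\ldots,w_n]$ has players $1,\ldots,n$ with nonnegative weights $w_j$ and quota $q$, $0<q\le\sum_jw_j$; a coalition $S$ is winning iff $\sum_{j\in S}w_j\ge q$. Player $j$ is critical in $S$ if $S$ is winning and $S\setminus\{j\}$ is losing; $\eta_j$ is the number of coalitions in which $j$ is critical, and the Banzhaf index is $\beta_j=\eta_j/\sum_k\eta_k$. Merging a set $T$ of players yields the WVG with the same quota in which the players of $T$ are replaced by a single player $\&T$ of weight $\sum_{j\in T}w_j$. *)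

From HB Require Import structures.
From mathcomp Require Import all_boot all_order all_algebra.
Set Implicit Arguments. Unset Strict Implicit. Unset Printing Implicit Defensive.
Import Order.TTheory GRing.Theory Num.Theory.

Definition winning (I : finType) (q : nat) (w : I -> nat) (S : {set I}) : bool :=
  q <= \sum_(j in S) w j.

Definition critical (I : finType) (q : nat) (w : I -> nat) (j : I) (S : {set I}) : bool :=
  [&& j \in S, winning q w S & ~~ winning q w (S :\ j)].

Definition eta (I : finType) (q : nat) (w : I -> nat) (j : I) : nat :=
  #|[set S : {set I} | critical q w j S]|.

Definition banzhaf (I : finType) (q : nat) (w : I -> nat) (j : I) : rat :=
  ((eta q w j)%:R / (\sum_(k : I) eta q w k)%:R)%R.

(* Merging a set T of players: the new player set consists of the players
   outside T (Some x) together with the single merged player &T (None),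
   whose weight is the total weight of T.  The quota is unchanged. *)
Definition merged_player (I : finType) (T : {set I}) : finType :=
  option {x : I | x \notin T}.

Definition merge_weights (I : finType) (w : I -> nat) (T : {set I})
    (p : merged_player T) : nat :=
  match p with
  | None => \sum_(j in T) w j
  | Some x => w (val x)
  end.

(* The game v = [4A+2; 8a_1, ..., 8a_k, 1, 1, 1], players 0..k+2 (0-based). *)
Definition v_weights (k : nat) (a : 'I_k -> nat) (i : 'I_k.+3) : nat :=
  match ltnP i k with
  | LtnNotGeq Hi => 8 * a (Ordinal Hi)
  | _ => 1
  end.

Definition v_quota (k : nat) (a : 'I_k -> nat) : nat :=
  4 * (\sum_(j < k) a j) + 2.

Arguments merge_weights {I} w T p.

From Pilot Require Import Defs.
From HB Require Import structures.
From mathcomp Require Import all_boot all_order all_algebra.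
From mathcomp Require Import zify.
Import Order.TTheory GRing.Theory Num.Theory.

(* The proof counts swings explicitly.  A coalition of v is described by a set
   B of "large" players (weight 8 a_j) and three bits telling which "small"
   players (weight 1) it contains; a coalition of the merged game by B, the bit
   of the remaining small player and the bit of the merged player (weight 2).
   As 8 w(B) and the quota 4A + 2 have known residues mod 4, the swing windows
   reduce to elementary arithmetic, and with N the number of sets B such that
   2 w(B) = A we obtain:
   - every small player of v and the merged player swing 2N times;
   - the remaining small player of the merged game never swings;
   - every large player swings twice as often in v as in the merged game.
   So beta_{&T} = 2N / (2N + Y) and beta_{n-1} + beta_n = 4N / (6N + 2Y), Y being
   the total swing count of the large players after merging, and the
   inequality holds iff N > 0.  The file proves generic counting facts, sets up
   both coordinate systems, the window arithmetic and the swing counts, and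
   concludes with the theorem. *)

Lemma critical_window (I : finType) (q : nat) (w : I -> nat) (j : I) (S : {set I}) :
  critical q w j S =
  [&& j \in S, q <= \sum_(i in S) w i & \sum_(i in S) w i < q + w j].
Proof.
rewrite /critical /winning; case jS: (j \in S) => //=.
by rewrite (big_setD1 j jS) /= -ltnNge [w j + _]addnC ltn_add2r.
Qed.

Lemma eta_indicator (I : finType) (q : nat) (w : I -> nat) (j : I) :
  Defs.eta q w j = \sum_(S : {set I}) critical q w j S.
Proof.
rewrite /Defs.eta -sum1_card big_mkcond; apply: eq_bigr => S _.
by rewrite inE; case: critical.
Qed.

Lemma sum_sig (I : finType) (P : pred I) (F : I -> nat) :
  \sum_(u : {x : I | P x}) F (val u) = \sum_(i | P i) F i.
Proof.
symmetry; rewrite (reindex_omap (val : {x : I | P x} -> I) insub) /=; last first.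
  by move=> i Pi; rewrite insubT.
by apply: eq_bigl => -[i Pi] /=; rewrite insubT /= Pi; apply/eqP; congr Some.
Qed.

Lemma sum_option (U : finType) (F : option U -> nat) :
  \sum_p F p = F None + \sum_u F (Some u).
Proof.
rewrite (bigD1 None) //=; congr (_ + _).
rewrite (reindex_omap (@Some U) id) /=; last by case.
by apply: eq_bigl => u; rewrite eqxx.
Qed.

Section Coordinates.

Variables (k : nat) (a : 'I_k -> nat).
Implicit Types (B : {set 'I_k}).

Lemma val_inord_large (j : 'I_k) : (inord j : 'I_k.+3) = j :> nat.
Proof. by rewrite inordK //; have := ltn_ord j; lia. Qed.

Lemma ord3_cases (i : 'I_k.+3) :
  [\/ exists j : 'I_k, i = inord j, i = inord k, i = inord k.+1 | i = inord k.+2].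
Proof.
case: (ltnP i k) => [ik | ki].
  by apply: Or41; exists (Ordinal ik); apply: val_inj; rewrite /= inordK //; lia.
have ltik := ltn_ord i.
have : (i : nat) \in [:: k; k.+1; k.+2] by rewrite !inE; lia.
by rewrite !inE => /or3P[] /eqP ei; [apply: Or42 | apply: Or43 | apply: Or44];
  apply: val_inj; rewrite /= inordK //; lia.
Qed.

Lemma sum_players (F : 'I_k.+3 -> nat) :
  \sum_i F i =
  \sum_(j < k) F (inord j) + F (inord k) + F (inord k.+1) + F (inord k.+2).
Proof.
rewrite (eq_bigr (fun i : 'I_k.+3 => F (inord i))); last by move=> i _; rewrite inord_val.
have -> : \sum_(i < k.+3) F (inord i) = \sum_(0 <= i < k.+3) F (inord i).
  by rewrite big_mkord.
by rewrite big_nat_recr // big_nat_recr // big_nat_recr //= big_mkord.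
Qed.

Definition coalition B b0 b1 b2 : {set 'I_k.+3} :=
  [set i : 'I_k.+3 | if (i : nat) < k then [exists j in B, (j : nat) == i]
     else if (i : nat) == k then b0 else if (i : nat) == k.+1 then b1 else b2].

Lemma mem_coalition_large B b0 b1 b2 (j : 'I_k) :
  (inord j \in coalition B b0 b1 b2) = (j \in B).
Proof.
rewrite inE val_inord_large ltn_ord.
apply/existsP/idP => [[j' /andP[j'B /eqP ej]] | jB]; last by exists j; rewrite jB eqxx.
by rewrite -(ord_inj ej).
Qed.

Lemma mem_coalition_x0 B b0 b1 b2 : (inord k \in coalition B b0 b1 b2) = b0.
Proof. by rewrite inE inordK ?ltnn ?eqxx //; lia. Qed.

Lemma mem_coalition_x1 B b0 b1 b2 : (inord k.+1 \in coalition B b0 b1 b2) = b1.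
Proof.
rewrite inE inordK; last lia.
by rewrite ifN; [rewrite ifN ?eqxx // | ]; lia.
Qed.

Lemma mem_coalition_x2 B b0 b1 b2 : (inord k.+2 \in coalition B b0 b1 b2) = b2.
Proof. by rewrite inE inordK ?ifN //; lia. Qed.

Lemma sum_coalitions (G : {set 'I_k.+3} -> nat) :
  \sum_S G S =
  \sum_B \sum_(b0 : bool) \sum_(b1 : bool) \sum_(b2 : bool) G (coalition B b0 b1 b2).
Proof.
rewrite (reindex (fun p : {set 'I_k} * bool * bool * bool =>
                    coalition p.1.1.1 p.1.1.2 p.1.2 p.2)) /=.
  rewrite -[LHS](pair_bigA _ (fun x b2 => G (coalition x.1.1 x.1.2 x.2 b2))) /=.
  rewrite -[LHS](pair_bigA _ (fun x b1 => \sum_b2 G (coalition x.1 x.2 b1 b2))) /=.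
  by rewrite -[LHS](pair_bigA _ (fun B b0 => \sum_b1 \sum_b2 G (coalition B b0 b1 b2))).
exists (fun S : {set 'I_k.+3} => ([set j : 'I_k | inord j \in S],
   inord k \in S, inord k.+1 \in S, inord k.+2 \in S)).
  move=> [[[B b0] b1] b2] _ /=.
  rewrite mem_coalition_x0 mem_coalition_x1 mem_coalition_x2.
  by congr (_, _, _, _); apply/setP => j; rewrite inE mem_coalition_large.
move=> S _; apply/setP => i /=.
case: (ord3_cases i) => [[j ->] | -> | -> | ->].
- by rewrite mem_coalition_large inE.
- by rewrite mem_coalition_x0.
- by rewrite mem_coalition_x1.
- by rewrite mem_coalition_x2.
Qed.

Lemma v_weights_large (j : 'I_k) : v_weights a (inord j) = 8 * a j.
Proof.
rewrite /v_weights; case: ltnP => [lt_jk | ]; last by rewrite val_inord_large leqNgt ltn_ord.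
by congr (8 * a _); apply: val_inj; rewrite /= val_inord_large.
Qed.

Lemma v_weights_small (i : 'I_k.+3) : k <= i -> v_weights a i = 1.
Proof. by rewrite /v_weights; case: ltnP => // lt_ik; rewrite leqNgt lt_ik. Qed.

Lemma v_weights_x0 : v_weights a (inord k) = 1.
Proof. by apply: v_weights_small; rewrite inordK //; lia. Qed.

Lemma v_weights_x1 : v_weights a (inord k.+1) = 1.
Proof. by apply: v_weights_small; rewrite inordK //; lia. Qed.

Lemma v_weights_x2 : v_weights a (inord k.+2) = 1.
Proof. by apply: v_weights_small; rewrite inordK //; lia. Qed.

Lemma weight_coalition B b0 b1 b2 :
  \sum_(i in coalition B b0 b1 b2) v_weights a i =
  8 * \sum_(j in B) a j + (b0 + b1 + b2).
Proof.
rewrite big_mkcond sum_players mem_coalition_x0 mem_coalition_x1 mem_coalition_x2.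
rewrite v_weights_x0 v_weights_x1 v_weights_x2 big_distrr /= [X in _ = X + _]big_mkcond.
rewrite -!addnA; congr (_ + _).
by apply: eq_bigr => j _; rewrite mem_coalition_large v_weights_large; case: (j \in B).
Qed.

(* Coordinates for the merged game: the small players inord k.+1 and
   inord k.+2 form the set T, replaced by the merged player None of weight 2.
   A coalition of the merged game corresponds to a coalition of v that
   contains both or neither of the players of T, i.e. to coordinates
   (B, b0, b1, b1). *)
Definition T_merge : {set 'I_k.+3} := [set inord k.+1; inord k.+2].

Notation merged := (merged_player T_merge).

Lemma T_merge_large (j : 'I_k) : (inord j \in T_merge) = false.
Proof.
by rewrite !inE -!val_eqE /= val_inord_large !inordK //; have := ltn_ord j; lia.
Qed.

Lemma T_merge_x0 : (inord k \in T_merge) = false.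
Proof. by rewrite !inE -!val_eqE /= !inordK //; lia. Qed.

Lemma T_merge_x1 : inord k.+1 \in T_merge.
Proof. by rewrite !inE eqxx. Qed.

Lemma T_merge_x2 : inord k.+2 \in T_merge.
Proof. by rewrite !inE eqxx orbT. Qed.

Definition contract (S : {set 'I_k.+3}) : {set merged} :=
  [set p : merged | if p is Some u then val u \in S else inord k.+1 \in S].

Definition expand (S' : {set merged}) : {set 'I_k.+3} :=
  [set i | if insub i is Some u then Some u \in S' else None \in S'].

Lemma mem_contract_None (S : {set 'I_k.+3}) :
  (None \in contract S) = (inord k.+1 \in S).
Proof. by rewrite inE. Qed.

Lemma mem_contract_Some (S : {set 'I_k.+3}) u :
  (Some u \in contract S) = (val u \in S).
Proof. by rewrite inE. Qed.

Lemma contractK : cancel expand contract.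
Proof.
move=> S'; apply/setP => -[u|]; rewrite !inE; first by rewrite valK.
by rewrite insubN // negbK T_merge_x1.
Qed.

Lemma mem_expand_contract (S : {set 'I_k.+3}) (i : 'I_k.+3) :
  (i \in expand (contract S)) = if i \in T_merge then inord k.+1 \in S else i \in S.
Proof.
by rewrite inE; case: insubP => [u /negbTE -> <- | /negPn ->]; rewrite inE.
Qed.

Lemma expand_contract_coalition B b0 b1 b2 :
  expand (contract (coalition B b0 b1 b2)) = coalition B b0 b1 b1.
Proof.
apply/setP => i; rewrite mem_expand_contract.
case: (ord3_cases i) => [[j ->] | -> | -> | ->].
- by rewrite T_merge_large !mem_coalition_large.
- by rewrite T_merge_x0 !mem_coalition_x0.
- by rewrite T_merge_x1 !mem_coalition_x1.
- by rewrite T_merge_x2 mem_coalition_x1 mem_coalition_x2.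
Qed.

Lemma sum_merged_coalitions (G : {set merged} -> nat) :
  \sum_S' G S' =
  \sum_B \sum_(b0 : bool) \sum_(b1 : bool) G (contract (coalition B b0 b1 b1)).
Proof.
rewrite (reindex_onto contract expand); last by move=> S' _; rewrite contractK.
rewrite big_mkcond sum_coalitions; apply: eq_bigr => B _; apply: eq_bigr => b0 _.
apply: eq_bigr => b1 _; rewrite big_bool !expand_contract_coalition.
have same_coalition b2 : (coalition B b0 b1 b1 == coalition B b0 b1 b2) = (b1 == b2).
  apply/eqP/eqP => [E | <-] //.
  by rewrite -(mem_coalition_x2 B b0 b1 b1) E mem_coalition_x2.
by rewrite !same_coalition; case: b1 {same_coalition}; rewrite /= ?addn0.
Qed.

Lemma merged_weight_None : merge_weights (v_weights a) T_merge None = 2.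
Proof.
rewrite /= big_mkcond sum_players T_merge_x0 T_merge_x1 T_merge_x2.
rewrite v_weights_x1 v_weights_x2.
by rewrite big1 // => j _; rewrite T_merge_large.
Qed.

Lemma weight_contract B b0 b1 :
  \sum_(p in contract (coalition B b0 b1 b1)) merge_weights (v_weights a) T_merge p =
  8 * \sum_(j in B) a j + (b0 + b1.*2).
Proof.
rewrite big_mkcond sum_option inE mem_coalition_x1 merged_weight_None.
pose F i := if i \in coalition B b0 b1 b1 then v_weights a i else 0.
rewrite (eq_bigr (fun u : {x | x \notin T_merge} => F (val u))); last first.
  by move=> u _; rewrite inE.
rewrite (sum_sig _ (fun x => x \notin T_merge) F) {}/F big_mkcond sum_players.
rewrite T_merge_x0 T_merge_x1 T_merge_x2 /= mem_coalition_x0 v_weights_x0.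
have -> : \sum_(j < k) (if inord j \notin T_merge then
            if inord j \in coalition B b0 b1 b1 then v_weights a (inord j) else 0
          else 0) = 8 * \sum_(j in B) a j.
  rewrite big_distrr [RHS]big_mkcond /=; apply: eq_bigr => j _.
  by rewrite T_merge_large mem_coalition_large v_weights_large; case: (j \in B).
by case: b0; case: b1 => /=; lia.
Qed.

End Coordinates.

Arguments ord3_cases {k} i.
Arguments coalition {k} B b0 b1 b2.
Arguments contract {k} S.
Arguments expand {k} S'.

(* Every coalition of v weighs 8m + t with
   t <= 3 small players, while the quota is 4A + 2; since 8m and 4A are
   multiples of 4 only t = 2 can hit a window of width at most 2, and a window
   of width a multiple of 4 only sees whether t >= 2. *)
Lemma small_window (A m t w : nat) : t <= 3 -> w <= 2 ->
  (4 * A + 2 <= 8 * m + t < 4 * A + 2 + w) = (2 * m == A) && (2 <= t < 2 + w).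
Proof. by move=> ht hw; apply/idP/idP; lia. Qed.

Lemma large_window (A m t d : nat) : t <= 3 -> 4 %| d ->
  (4 * A + 2 <= 8 * m + t < 4 * A + 2 + d) =
  (4 * A + 2 <= 8 * m + (2 <= t).*2 < 4 * A + 2 + d).
Proof. by move=> + /dvdnP[c ->]; case: t => [|[|[|[|t]]]] //= _; apply/idP/idP; lia. Qed.

Lemma sum_small_players (g : nat -> nat) :
  (forall t, t <= 3 -> g t = g (2 <= t).*2) ->
  \sum_(b0 : bool) \sum_(b1 : bool) \sum_(b2 : bool) g (b0 + b1 + b2) =
  2 * \sum_(b0 : bool) \sum_(b1 : bool) g (b0 + b1.*2).
Proof.
move=> gE; have g3 : g 3 = g 2 := gE 3 erefl; have g1 : g 1 = g 0 := gE 1 erefl.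
rewrite !big_bool.
change (g 3 + g 2 + (g 2 + g 1) + (g 2 + g 1 + (g 1 + g 0)) = 2 * (g 3 + g 1 + (g 2 + g 0))).
lia.
Qed.

Section SwingCounts.

Variables (k : nat) (a : 'I_k -> nat).

Notation A := (\sum_(j < k) a j).
Notation weight B := (\sum_(j in B) a j).
Notation merged_weights := (merge_weights (v_weights a) (T_merge k)).

Definition balanced_count : nat := \sum_(B : {set 'I_k}) (2 * weight B == A).

Lemma eta_v_coords (i : 'I_k.+3) (mem : {set 'I_k} -> bool -> bool -> bool -> bool) :
  (forall B b0 b1 b2, (i \in coalition B b0 b1 b2) = mem B b0 b1 b2) ->
  Defs.eta (v_quota a) (v_weights a) i =
  \sum_B \sum_(b0 : bool) \sum_(b1 : bool) \sum_(b2 : bool)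
    [&& mem B b0 b1 b2, 4 * A + 2 <= 8 * weight B + (b0 + b1 + b2)
      & 8 * weight B + (b0 + b1 + b2) < 4 * A + 2 + v_weights a i].
Proof.
move=> memE; rewrite eta_indicator sum_coalitions; do 4 (apply: eq_bigr => ? _).
by rewrite critical_window weight_coalition memE.
Qed.

Lemma eta_merged_coords (p : merged_player (T_merge k))
    (mem : {set 'I_k} -> bool -> bool -> bool) :
  (forall B b0 b1, (p \in contract (coalition B b0 b1 b1)) = mem B b0 b1) ->
  Defs.eta (v_quota a) merged_weights p =
  \sum_B \sum_(b0 : bool) \sum_(b1 : bool)
    [&& mem B b0 b1, 4 * A + 2 <= 8 * weight B + (b0 + b1.*2)
      & 8 * weight B + (b0 + b1.*2) < 4 * A + 2 + merged_weights p].
Proof.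
move=> memE; rewrite eta_indicator sum_merged_coalitions; do 3 (apply: eq_bigr => ? _).
by rewrite critical_window weight_contract memE.
Qed.

(* A small player of v swings exactly when the large players present form a
   balanced set and exactly one other small player is present. *)
Lemma eta_v_small (i : 'I_k.+3) : k <= i ->
  Defs.eta (v_quota a) (v_weights a) i = 2 * balanced_count.
Proof.
move=> ki; rewrite big_distrr.
case: (ord3_cases i) ki => [[j ->] | -> | -> | ->] ki.
- by rewrite val_inord_large leqNgt ltn_ord in ki.
- rewrite (eta_v_coords _ (fun _ b0 _ _ => b0)) => [|*]; last exact: mem_coalition_x0.
  rewrite v_weights_x0; apply: eq_bigr => B _.
  by rewrite !big_bool !small_window //; case: eqP.
- rewrite (eta_v_coords _ (fun _ _ b1 _ => b1)) => [|*]; last exact: mem_coalition_x1.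
  rewrite v_weights_x1; apply: eq_bigr => B _.
  by rewrite !big_bool !small_window //; case: eqP.
- rewrite (eta_v_coords _ (fun _ _ _ b2 => b2)) => [|*]; last exact: mem_coalition_x2.
  rewrite v_weights_x2; apply: eq_bigr => B _.
  by rewrite !big_bool !small_window //; case: eqP.
Qed.

(* The merged player swings exactly when the large players present form a
   balanced set, whatever the remaining small player does. *)
Lemma eta_merged_None :
  Defs.eta (v_quota a) merged_weights None = 2 * balanced_count.
Proof.
rewrite (eta_merged_coords _ (fun _ _ b1 => b1)) => [|*]; last first.
  by rewrite mem_contract_None mem_coalition_x1.
rewrite merged_weight_None [RHS]big_distrr; apply: eq_bigr => B _.
by rewrite !big_bool !small_window //; case: eqP.
Qed.

(* After merging, the remaining small player is never critical: the small
   players present weigh b0 + 2 b1, which is odd whenever it is present. *)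
Lemma eta_merged_x0 :
  Defs.eta (v_quota a) merged_weights (insub (inord k)) = 0.
Proof.
case: insubP => [u _ uk | /negPn]; last by rewrite T_merge_x0.
rewrite (eta_merged_coords _ (fun _ b0 _ => b0)) => [|*]; last first.
  by rewrite mem_contract_Some uk mem_coalition_x0.
rewrite /= uk v_weights_x0; apply: big1 => B _.
by rewrite !big_bool !small_window //; case: eqP.
Qed.

(* A large player swings twice as often in v as in the merged game: its
   swings only depend on whether at least two small players are present. *)
Lemma eta_large (j : 'I_k) :
  Defs.eta (v_quota a) (v_weights a) (inord j) =
  2 * Defs.eta (v_quota a) merged_weights (insub (inord j)).
Proof.
case: insubP => [u _ uj | /negPn]; last by rewrite T_merge_large.
rewrite (eta_v_coords _ (fun B _ _ _ => j \in B)) => [|*]; last first.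
  exact: mem_coalition_large.
rewrite (eta_merged_coords _ (fun B _ _ => j \in B)) => [|*]; last first.
  by rewrite mem_contract_Some uj mem_coalition_large.
rewrite /= uj v_weights_large [RHS]big_distrr; apply: eq_bigr => B _.
apply: (sum_small_players (fun t => [&& j \in B, 4 * A + 2 <= 8 * weight B + t
                                      & 8 * weight B + t < 4 * A + 2 + 8 * a j])).
by move=> t t3; rewrite large_window // dvdn_mulr.
Qed.

Lemma total_eta_merged :
  \sum_p Defs.eta (v_quota a) merged_weights p =
  2 * balanced_count + \sum_(j < k) Defs.eta (v_quota a) merged_weights (insub (inord j)).
Proof.
rewrite sum_option eta_merged_None; congr (_ + _).
pose F i := Defs.eta (v_quota a) merged_weights (insub i).
rewrite (eq_bigr (fun u : {x | x \notin T_merge k} => F (val u))); last first.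
  by move=> u _; rewrite /F valK.
rewrite (sum_sig _ (fun x => x \notin T_merge k) F) big_mkcond sum_players.
rewrite T_merge_x0 T_merge_x1 T_merge_x2 /F eta_merged_x0 !addn0.
by apply: eq_bigr => j _; rewrite T_merge_large.
Qed.

Lemma total_eta_v :
  \sum_i Defs.eta (v_quota a) (v_weights a) i =
  2 * \sum_(j < k) Defs.eta (v_quota a) merged_weights (insub (inord j))
  + 3 * (2 * balanced_count).
Proof.
rewrite sum_players big_distrr /= -(eq_bigr _ (fun j _ => eta_large j)).
by rewrite !eta_v_small ?inordK //; lia.
Qed.

Lemma balanced_countP :
  0 < balanced_count <-> exists P : {set 'I_k}, weight P = weight (~: P).
Proof.
have splitA (P : {set 'I_k}) : A = weight P + weight (~: P).
  by rewrite (bigID (mem P)) /=; congr (_ + _); apply: eq_bigl => j; rewrite inE.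
split => [ | [P balP]].
  rewrite /balanced_count lt0n sum_nat_eq0 negb_forall => /existsP[B].
  rewrite eqb0 negbK => /eqP.
  by rewrite (splitA B) => balB; exists B; lia.
by rewrite /balanced_count (bigD1 P) //= (splitA P) balP addnn -mul2n eqxx.
Qed.

End SwingCounts.

Lemma ltr_nat_frac (x y z t : nat) : 0 < y -> 0 < t ->
  ((x%:R / y%:R : rat) < z%:R / t%:R)%R = (x * t < z * y).
Proof.
move=> y_gt0 t_gt0.
by rewrite ltr_pdivrMr ?ltr0n // mulrAC ltr_pdivlMr ?ltr0n // -!natrM ltr_nat.
Qed.

Lemma swing_ratio (N Y : nat) :
  ((2 * N)%:R / (2 * N + Y)%:R >
     (2 * N)%:R / (2 * Y + 3 * (2 * N))%:R + (2 * N)%:R / (2 * Y + 3 * (2 * N))%:R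
   :> rat)%R <-> 0 < N.
Proof.
have [-> | N_gt0] := posnP N; first by rewrite !muln0 !mul0r addr0 ltxx.
by split=> // _; rewrite -mulrDl -natrD ltr_nat_frac; lia.
Qed.

Theorem mainTheorem7 (k : nat) (a : 'I_k -> nat) (a_pos : forall j, 0 < a j) :
  let T : {set 'I_k.+3} := [set (inord k.+1 : 'I_k.+3); inord k.+2] in
  (banzhaf (v_quota a) (merge_weights (v_weights a) T) None >
     banzhaf (v_quota a) (v_weights a) (inord k.+1)
     + banzhaf (v_quota a) (v_weights a) (inord k.+2))%R
  <-> exists P : {set 'I_k}, \sum_(j in P) a j = \sum_(j in ~: P) a j.
Proof.
move=> T; rewrite /banzhaf total_eta_merged total_eta_v eta_merged_None.
rewrite !eta_v_small ?inordK //; try lia.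
rewrite swing_ratio; exact: balanced_countP.
Qed.
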